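(* Let $G$ be a connected graph on $n=|G|\ge 2$ vertices and let $w\in V(G)$. If for every $1\le i\le \mathrm{diam}(G)$ the set $V_i(w)=\{v\in V(G)\setminus\{w\} : d(v,w)=i\}$ has exactly one element, then $$ar_w(G)=\frac{2}{n(n-1)}\sum_{(u,v)\in V_p} r_w(u,v).$$
   Context: Graphs are finite, simple and connected; $d(u,v)$ denotes the shortest-path distance and $\mathrm{diam}(G)$ the diameter. $V_p$ denotes the set of all unordered pairs $(u,v)$ of distinct vertices. A vertex $x$ resolves the pair $(u,v)$ if $d(x,u)\neq d(x,v)$. For $(u,v)\in V_p$, $R(u,v)$ is the set of all vertices resolving $(u,v)$. The resolving share of a vertex $w$ for $(u,v)$ is $r_w(u,v)=\frac{1}{|R(u,v)|}$ if $w$ resolves $u$ and $v$, and $r_w(u,v)=0$ otherwise. For a vertex $w$, $R(w)$ is the set of pairs in $V_p$ resolved by $w$, and the average resolving share of $w$ is $ar_w(G)=\frac{1}{|R(w)|}\sum_{(u,v)\in R(w)} r_w(u,v)$. *)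

(* A simple graph is a symmetric irreflexive relation e on a finType T. *)
From mathcomp Require Import all_boot all_order all_algebra.
Set Implicit Arguments. Unset Strict Implicit. Unset Printing Implicit Defensive.
Import Order.TTheory GRing.Theory Num.Theory.

Local Open Scope ring_scope.
Section Graph.
Variables (T : finType) (e : rel T).

Fixpoint ball (k : nat) (u : T) : {set T} :=
  match k with
  | 0 => [set u]
  | k'.+1 => ball k' u :|: [set y | [exists x in ball k' u, e x y]]
  end.

(* shortest-path distance: least k with v in ball k u (all distances in a
   connected graph on #|T| vertices are < #|T|) *)
Definition dist (u v : T) : nat := find (fun k => v \in ball k u) (iota 0 #|T|).

Definition diam : nat := \max_(u : T) \max_(v : T) dist u v.

(* unordered pairs of distinct vertices = 2-element subsets *)
Definition is_pair (p : {set T}) : bool := #|p| == 2.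

Definition resolves (x : T) (p : {set T}) : bool :=
  [exists u in p, exists v in p, dist x u != dist x v].

Definition resolving_set (p : {set T}) : {set T} := [set x | resolves x p].

Definition resolving_share (w : T) (p : {set T}) : rat :=
  if resolves w p then (#|resolving_set p|%:R)^-1 else 0.

Definition resolved_pairs (w : T) : {set {set T}} :=
  [set p | is_pair p & resolves w p].

Definition avg_resolving_share (w : T) : rat :=
  (#|resolved_pairs w|%:R)^-1 * \sum_(p in resolved_pairs w) resolving_share w p.

Definition level (w : T) (i : nat) : {set T} := [set v | (v != w) && (dist v w == i)].

End Graph.

(* If every distance level around [w] is a single vertex, then
   [d(w, .)] is injective, so [w] resolves every pair of distinct vertices.
   Hence [R(w)] is all of [V_p], which has [n(n-1)/2] elements, and the
   average resolving share of [w] is the plain average over [V_p]. *)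
From mathcomp Require Import all_boot all_order all_algebra.
Set Implicit Arguments. Unset Strict Implicit. Unset Printing Implicit Defensive.
Import Order.TTheory GRing.Theory Num.Theory.
Local Open Scope ring_scope.

Section Distance.
Variables (T : finType) (e : rel T).

Lemma ball_edge k u v x : e u v -> x \in ball e k v -> x \in ball e k.+1 u.
Proof.
move=> euv; elim: k x => [|k IHk] x /=.
  rewrite in_set1 => /eqP ->; rewrite in_setU; apply/orP; right.
  by rewrite inE; apply/existsP; exists u; rewrite in_set1 eqxx euv.
rewrite in_setU => /orP [/IHk xB | ]; first by rewrite in_setU xB.
rewrite inE => /existsP [y /andP [yB eyx]].
rewrite in_setU; apply/orP; right; rewrite inE; apply/existsP; exists y.
by rewrite (IHk _ yB) eyx.
Qed.

Hypothesis e_sym : symmetric e.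

Lemma ball_sym k u v : v \in ball e k u -> u \in ball e k v.
Proof.
elim: k u v => [|k IHk] u v /=; first by rewrite !in_set1 eq_sym.
rewrite in_setU => /orP [/IHk uB | ]; first by rewrite in_setU uB.
rewrite inE => /existsP [x /andP [xB exv]].
by apply: (@ball_edge k v x); [rewrite e_sym | exact: IHk].
Qed.

Lemma dist_sym u v : dist e u v = dist e v u.
Proof. by apply: eq_find => k; apply/idP/idP => /ball_sym. Qed.

End Distance.

Section Levels.
Variables (T : finType) (e : rel T).

Lemma dist_eq0 u v : (dist e u v == 0%N) = (u == v).
Proof.
have : (0 < #|T|)%N by apply/card_gt0P; exists u.
by rewrite /dist; case: #|T| => // n _ /=; rewrite in_set1 (eq_sym u); case: (v == u).
Qed.

Lemma leq_dist_diam u v : (dist e u v <= diam e)%N.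
Proof.
apply: leq_trans (leq_bigmax_cond u isT).
exact: (leq_bigmax_cond v isT).
Qed.

Lemma dist_inj_of_levels (w : T) :
  symmetric e ->
  (forall i, (1 <= i <= diam e)%N -> (#|level e w i| <= 1)%N) ->
  injective (dist e w).
Proof.
move=> e_sym hlev u v.
have dist_w_eq0 x : (dist e w x == 0%N) = (x == w) by rewrite dist_eq0 eq_sym.
have [-> duv | uw] := eqVneq u w.
  by apply/eqP; rewrite eq_sym -dist_w_eq0 -duv dist_w_eq0.
have [-> duv | vw duv] := eqVneq v w.
  by apply/eqP; rewrite -dist_w_eq0 duv dist_w_eq0.
set i := dist e u w.
have i_range : (1 <= i <= diam e)%N by rewrite lt0n dist_eq0 uw leq_dist_diam.
have uL : u \in level e w i by rewrite inE uw eqxx.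
have vL : v \in level e w i by rewrite inE vw /i !(dist_sym e_sym _ w) duv eqxx.
by have /card_le1_eqP := hlev i i_range; apply.
Qed.

Lemma resolves_pair_of_inj (x : T) (p : {set T}) :
  injective (dist e x) -> is_pair p -> resolves e x p.
Proof.
move=> dinj /cards2P [u [v [uv ->]]].
apply/existsP; exists u; rewrite !inE eqxx /=.
apply/existsP; exists v; rewrite !inE eqxx orbT /=.
by apply: contra uv => /eqP /dinj ->.
Qed.

End Levels.

Lemma inv_binomial2 (R : numFieldType) (n : nat) :
  ('C(n, 2)%:R : R)^-1 = 2 / (n * (n - 1))%:R.
Proof.
have -> : (n * (n - 1) = 'C(n, 2) * 2)%N by rewrite bin_ffact ffactnS ffactn1 subn1.
by rewrite natrM invfM mulrCA divff ?mulr1 ?pnatr_eq0.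
Qed.

Theorem proposition3p4 (T : finType) (e : rel T)
  (e_sym : symmetric e) (e_irr : irreflexive e)
  (e_conn : forall u v : T, connect e u v)
  (n_ge2 : (2 <= #|T|)%N) (w : T)
  (hlev : forall i : nat, (1 <= i <= diam e)%N -> #|level e w i| = 1%N) :
  avg_resolving_share e w =
    2 / (#|T| * (#|T| - 1))%:R * \sum_(p : {set T} | is_pair p) resolving_share e w p.
Proof.
have dinj : injective (dist e w).
  by apply: dist_inj_of_levels => // i /hlev ->.
have all_resolved : resolved_pairs e w = [set p | is_pair p].
  by apply/setP => p; rewrite !inE andb_idr // => /(resolves_pair_of_inj dinj).
rewrite /avg_resolving_share all_resolved card_draws inv_binomial2.
by congr (_ * _); apply: eq_bigl => p; rewrite inE.
Qed.
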